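(* Assume $\|\mathbf G^{(l)}\|\le A_0B_0^{l-1}$ for all $l\ge1$. For each eigenvalue $\mu=\lambda\pm\mathrm i\sqrt{1-\lambda^2}$ of $\mathbf U$ with $\lambda\in\sigma(\mathbf T)$, $|\lambda|<1$, the perturbed eigenvalue $\mu(\chi)=\lambda(\chi)\pm\mathrm i\sqrt{1-\lambda(\chi)^2}$ has an expansion $\mu(\chi)=\mu+\sum_{n\ge1}\chi^n\mu^{(n)}$ near $\chi=0$, and there exist constants $A_{13},B_{13}>0$ such that $|\mu^{(n)}|\le A_{13}B_{13}^{n-1}$ for all $n\ge1$; consequently the coefficients $a_1(n;m)$ of $\chi^n$ in $\mu(\chi)^{2m}$ satisfy $|a_1(n;m)|\le A_{14}B_{14}^{n-1}$ for constants $A_{14},B_{14}>0$ (depending also on $m$).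
   Context: $\mathbf G=[g_{ij}]$ is an $N\times N$ Google matrix with all entries positive. Perturbation: $\mathbf G(\chi)=[g_{ij}(\chi)]=\mathbf G+\sum_{l\ge1}\chi^l\mathbf G^{(l)}$, $\chi\in\mathbb C$, convergent near $0$, $\|\cdot\|$ the operator $2$-norm; for real $\chi$ near $0$, $\mathbf G(\chi)$ is row-stochastic with positive entries. $\mathbf T(\chi)=[\sqrt{g_{ij}(\chi)g_{ji}(\chi)}]$, $\mathbf T=\mathbf T(0)$; $\lambda(\chi)$ denotes the analytic eigenvalue branch of $\mathbf T(\chi)$ through the eigenvalue $\lambda$ of $\mathbf T$. $\mathbf U=\mathbf S_w(2\mathbf B-\mathbf I)$ with $\mathbf B=\sum_j|\psi_j\rangle\langle\psi_j|$, $|\psi_j\rangle=|j\rangle\otimes\sum_k\sqrt{g_{jk}}|k\rangle$, $\mathbf S_w=\sum_{j,k}|k,j\rangle\langle j,k|$; its eigenvalues associated with $\mathbf T$ are $\lambda\pm\mathrm i\sqrt{1-\lambda^2}$, $\lambda\in\sigma(\mathbf T)$. The square root branch is chosen holomorphic in $\chi$ near $0$. *)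

From Stdlib Require Import Reals Lra.
Open Scope R_scope.

Record Cx := mkC { Re : R; Im : R }.

Definition RtoC (r : R) : Cx := mkC r 0.
Definition Cx0 : Cx := RtoC 0.
Definition Cx1 : Cx := RtoC 1.
Definition Ci : Cx := mkC 0 1.
Definition Cadd (z w : Cx) : Cx := mkC (Re z + Re w) (Im z + Im w).
Definition Copp (z : Cx) : Cx := mkC (- Re z) (- Im z).
Definition Csub (z w : Cx) : Cx := Cadd z (Copp w).
Definition Cmul (z w : Cx) : Cx :=
  mkC (Re z * Re w - Im z * Im w) (Re z * Im w + Im z * Re w).
Fixpoint Cpow (z : Cx) (n : nat) : Cx :=
  match n with O => Cx1 | S k => Cmul z (Cpow z k) end.
Definition Cabs (z : Cx) : R := sqrt (Re z * Re z + Im z * Im z).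

(** Principal square root (holomorphic on Cx minus the non-positive reals,
    in particular near any positive real number). *)
Definition Csqrt (z : Cx) : Cx :=
  mkC (sqrt ((Cabs z + Re z) / 2))
      ((if Rlt_dec (Im z) 0 then -1 else 1) * sqrt ((Cabs z - Re z) / 2)).

Fixpoint Csum (a : nat -> Cx) (n : nat) : Cx :=
  match n with O => Cx0 | S k => Cadd (Csum a k) (a k) end.

Definition Cseries_sum (a : nat -> Cx) (s : Cx) : Prop :=
  forall eps : R, 0 < eps ->
    exists M : nat, forall n : nat, (M <= n)%nat -> Cabs (Csub (Csum a n) s) < eps.

Definition has_expansion (f : Cx -> Cx) (c : nat -> Cx) : Prop :=
  exists r : R, 0 < r /\
    forall z : Cx, Cabs z < r -> Cseries_sum (fun n => Cmul (c n) (Cpow z n)) (f z).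

(** N x N matrices and vectors, indices 0..N-1 *)
Definition Mat := nat -> nat -> Cx.
Definition Vec := nat -> Cx.

Definition matvec (N : nat) (M : Mat) (v : Vec) : Vec :=
  fun i => Csum (fun j => Cmul (M i j) (v j)) N.

Fixpoint Rsum (a : nat -> R) (n : nat) : R :=
  match n with O => 0 | S k => Rsum a k + a k end.

Definition vnorm (N : nat) (v : Vec) : R :=
  sqrt (Rsum (fun j => Rsqr (Cabs (v j))) N).

Definition is_eigenvalue (N : nat) (M : Mat) (z : Cx) : Prop :=
  exists v : Vec, (exists i, (i < N)%nat /\ v i <> Cx0) /\
    forall i, (i < N)%nat -> matvec N M v i = Cmul z (v i).

Definition Tmat (g : Mat) : Mat := fun i j => Csqrt (Cmul (g i j) (g j i)).

Definition pos_row_stochastic (N : nat) (M : Mat) : Prop :=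
  (forall i j, (i < N)%nat -> (j < N)%nat -> Im (M i j) = 0 /\ 0 < Re (M i j)) /\
  (forall i, (i < N)%nat -> Csum (fun j => M i j) N = Cx1).

(* The spectral hypotheses on G(chi) and T(chi) only serve to single out the
   analytic eigenvalue branch lambda(chi); the argument uses just that lambda
   has a convergent power series at 0 with |lambda(0)| < 1.  The theorem then
   reduces to closure properties of convergent power series, developed below:

   - a convergent series has geometrically bounded coefficients (Cauchy
     estimate), which is exactly the shape |c_n| <= A B^(n-1) of the claims;
   - convergent series are closed under constants, sums, scalar multiples and
     products (the Cauchy product, by a geometric estimate of its defect);
   - if f has a series with Re f(0) > 0 then so has the principal square root
     of f: the coefficients solve (s0 + t)^2 = f term by term, a majorant
     argument bounds them geometrically, and the resulting function agrees with
     Csqrt f near 0 because both square to f and have positive real part.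
   Since Re (1 - lambda(0)^2) > 0 when |lambda(0)| < 1, the function mu and
   all its powers mu^(2m) have convergent series, whence both bounds. *)

From Stdlib Require Import Reals Lra Lia ClassicalEpsilon.
Open Scope R_scope.

Lemma Cx_eq (z w : Cx) : Re z = Re w -> Im z = Im w -> z = w.
Proof. destruct z, w; simpl; intros; subst; reflexivity. Qed.

Ltac Cring := apply Cx_eq; unfold Csub, Copp, Cadd, Cmul, Cx0, Cx1, RtoC, Ci; simpl; ring.

Lemma le_of_sq_le (a b : R) : 0 <= b -> a * a <= b * b -> a <= b.
Proof. intros; nra. Qed.

Lemma Cabs_ge0 (z : Cx) : 0 <= Cabs z.
Proof. apply sqrt_pos. Qed.

Lemma Cabs_sq (z : Cx) : Cabs z * Cabs z = Re z * Re z + Im z * Im z.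
Proof. unfold Cabs; apply sqrt_sqrt; nra. Qed.

Lemma Cabs_mul (z w : Cx) : Cabs (Cmul z w) = Cabs z * Cabs w.
Proof. unfold Cabs, Cmul; simpl. rewrite <- sqrt_mult_alt by nra. f_equal; ring. Qed.

Lemma Rabs_Re_le (z : Cx) : Rabs (Re z) <= Cabs z.
Proof.
  apply le_of_sq_le; [apply Cabs_ge0|]. rewrite Cabs_sq, <- Rabs_mult, Rabs_right; nra.
Qed.

Lemma Rabs_Im_le (z : Cx) : Rabs (Im z) <= Cabs z.
Proof.
  apply le_of_sq_le; [apply Cabs_ge0|]. rewrite Cabs_sq, <- Rabs_mult, Rabs_right; nra.
Qed.

Lemma Re_le_Cabs (z : Cx) : Re z <= Cabs z.
Proof. pose proof (Rabs_Re_le z); pose proof (Rle_abs (Re z)); lra. Qed.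

Lemma Re_ge_neg_Cabs (z : Cx) : - Cabs z <= Re z.
Proof. pose proof (Rabs_Re_le z); pose proof (Rle_abs (- Re z)); rewrite Rabs_Ropp in *; lra. Qed.

Lemma Cabs_le_Re_Im (z : Cx) : Cabs z <= Rabs (Re z) + Rabs (Im z).
Proof.
  pose proof (Rabs_pos (Re z)); pose proof (Rabs_pos (Im z)).
  apply le_of_sq_le; [lra|]. rewrite Cabs_sq.
  assert (Rabs (Re z) * Rabs (Re z) = Re z * Re z) by (rewrite <- Rabs_mult; apply Rabs_right; nra).
  assert (Rabs (Im z) * Rabs (Im z) = Im z * Im z) by (rewrite <- Rabs_mult; apply Rabs_right; nra).
  nra.
Qed.

Lemma Cabs_triangle (z w : Cx) : Cabs (Cadd z w) <= Cabs z + Cabs w.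
Proof.
  pose proof (Cabs_ge0 z); pose proof (Cabs_ge0 w).
  assert (Hcs : Re z * Re w + Im z * Im w <= Cabs z * Cabs w).
  { apply le_of_sq_le; [nra|].
    replace (Cabs z * Cabs w * (Cabs z * Cabs w)) with ((Cabs z * Cabs z) * (Cabs w * Cabs w)) by ring.
    rewrite !Cabs_sq. pose proof (pow2_ge_0 (Re z * Im w - Im z * Re w)). nra. }
  apply le_of_sq_le; [lra|]. rewrite Cabs_sq. unfold Cadd; simpl.
  replace ((Cabs z + Cabs w) * (Cabs z + Cabs w))
    with (Cabs z * Cabs z + Cabs w * Cabs w + 2 * (Cabs z * Cabs w)) by ring.
  rewrite !Cabs_sq. nra.
Qed.

Lemma Cabs_RtoC (r : R) : Cabs (RtoC r) = Rabs r.
Proof. unfold Cabs, RtoC; simpl. rewrite <- sqrt_Rsqr_abs. unfold Rsqr; f_equal; ring. Qed.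

Lemma Cabs_Cx0 : Cabs Cx0 = 0.
Proof. unfold Cx0; rewrite Cabs_RtoC; apply Rabs_R0. Qed.

Lemma Cabs_pow (z : Cx) (n : nat) : Cabs (Cpow z n) = Cabs z ^ n.
Proof.
  induction n as [|n IH]; simpl.
  - unfold Cx1; rewrite Cabs_RtoC; apply Rabs_R1.
  - rewrite Cabs_mul, IH; ring.
Qed.

Lemma Cabs_sub_sym (z w : Cx) : Cabs (Csub z w) = Cabs (Csub w z).
Proof. unfold Cabs, Csub, Cadd, Copp; simpl; f_equal; ring. Qed.

Lemma Cabs_sub_triangle (z w : Cx) : Cabs (Csub z w) <= Cabs z + Cabs w.
Proof.
  unfold Csub. replace (Cabs w) with (Cabs (Copp w)) by (unfold Cabs, Copp; simpl; f_equal; ring).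
  apply Cabs_triangle.
Qed.

Lemma Cabs_eq0 (z : Cx) : Cabs z = 0 -> z = Cx0.
Proof.
  intros Hz. assert (Re z * Re z + Im z * Im z = 0) by (rewrite <- Cabs_sq, Hz; ring).
  apply Cx_eq; simpl; nra.
Qed.

Lemma Cabs_pos (z : Cx) : z <> Cx0 -> 0 < Cabs z.
Proof.
  intros Hz. destruct (Cabs_ge0 z) as [|H0]; [assumption|].
  exfalso. apply Hz, Cabs_eq0. symmetry; assumption.
Qed.

Lemma Cmul_integral (u v : Cx) : Cmul u v = Cx0 -> u = Cx0 \/ v = Cx0.
Proof.
  intros H. assert (Cabs u * Cabs v = 0) by (rewrite <- Cabs_mul, H; apply Cabs_Cx0).
  destruct (Rmult_integral _ _ H0); [left | right]; apply Cabs_eq0; assumption.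
Qed.

Lemma Cpow_add (z : Cx) (a b : nat) : Cpow z (a + b) = Cmul (Cpow z a) (Cpow z b).
Proof. induction a as [|a IH]; simpl. Cring. rewrite IH. Cring. Qed.

Definition Cinv (z : Cx) : Cx :=
  mkC (Re z / (Re z * Re z + Im z * Im z)) (- Im z / (Re z * Re z + Im z * Im z)).

Lemma Cinv_r (z : Cx) : z <> Cx0 -> Cmul z (Cinv z) = Cx1.
Proof.
  intros Hz. pose proof (Cabs_pos z Hz). pose proof (Cabs_sq z).
  assert (Hpos : 0 < Re z * Re z + Im z * Im z) by nra.
  apply Cx_eq; unfold Cinv, Cmul, Cx1, RtoC; simpl; field; lra.
Qed.

Lemma Csum_ext (f g : nat -> Cx) (n : nat) :
  (forall k, (k < n)%nat -> f k = g k) -> Csum f n = Csum g n.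
Proof.
  induction n as [|n IH]; simpl; intros H; [reflexivity|].
  rewrite IH, H by (try intros; try apply H; lia). reflexivity.
Qed.

Lemma Csum_add (f g : nat -> Cx) (n : nat) :
  Csum (fun k => Cadd (f k) (g k)) n = Cadd (Csum f n) (Csum g n).
Proof. induction n as [|n IH]; simpl. Cring. rewrite IH. Cring. Qed.

Lemma Csum_sub (f g : nat -> Cx) (n : nat) :
  Csum (fun k => Csub (f k) (g k)) n = Csub (Csum f n) (Csum g n).
Proof. induction n as [|n IH]; simpl. Cring. rewrite IH. Cring. Qed.

Lemma Csum_mul_l (w : Cx) (f : nat -> Cx) (n : nat) :
  Csum (fun k => Cmul w (f k)) n = Cmul w (Csum f n).
Proof. induction n as [|n IH]; simpl. Cring. rewrite IH. Cring. Qed.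

Lemma Csum_mul_r (w : Cx) (f : nat -> Cx) (n : nat) :
  Csum (fun k => Cmul (f k) w) n = Cmul (Csum f n) w.
Proof. induction n as [|n IH]; simpl. Cring. rewrite IH. Cring. Qed.

Lemma Csum_abs (f : nat -> Cx) (n : nat) : Cabs (Csum f n) <= Rsum (fun k => Cabs (f k)) n.
Proof.
  induction n as [|n IH]; simpl; [rewrite Cabs_Cx0; lra|].
  eapply Rle_trans; [apply Cabs_triangle | lra].
Qed.

Lemma Csum_supported_at0 (f : nat -> Cx) (n : nat) :
  (forall k, (1 <= k)%nat -> f k = Cx0) -> Csum f (S n) = f O.
Proof.
  intros H. induction n as [|n IH].
  - simpl. Cring.
  - change (Csum f (S (S n))) with (Cadd (Csum f (S n)) (f (S n))).
    rewrite IH, (H (S n)) by lia. Cring.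
Qed.

Lemma Rsum_ext (f g : nat -> R) (n : nat) :
  (forall k, (k < n)%nat -> f k = g k) -> Rsum f n = Rsum g n.
Proof.
  induction n as [|n IH]; simpl; intros H; [reflexivity|].
  rewrite IH, H by (try intros; try apply H; lia). reflexivity.
Qed.

Lemma Rsum_le (f g : nat -> R) (n : nat) : (forall k, (k < n)%nat -> f k <= g k) -> Rsum f n <= Rsum g n.
Proof.
  induction n as [|n IH]; simpl; intros H; [lra|].
  pose proof (H n ltac:(lia)). pose proof (IH ltac:(intros; apply H; lia)). lra.
Qed.

Lemma Rsum_nonneg (f : nat -> R) (n : nat) : (forall k, 0 <= f k) -> 0 <= Rsum f n.
Proof. intros H; induction n as [|n IH]; simpl; [lra|]. pose proof (H n); lra. Qed.

Lemma Rsum_mono (f : nat -> R) (m n : nat) : (forall k, 0 <= f k) -> (m <= n)%nat -> Rsum f m <= Rsum f n.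
Proof. intros H Hmn. induction Hmn; simpl; [lra|]. pose proof (H m0); lra. Qed.

Lemma Rsum_add (f g : nat -> R) (n : nat) : Rsum (fun k => f k + g k) n = Rsum f n + Rsum g n.
Proof. induction n as [|n IH]; simpl. ring. rewrite IH. ring. Qed.

Lemma Rsum_scal (c : R) (f : nat -> R) (n : nat) : Rsum (fun k => c * f k) n = c * Rsum f n.
Proof. induction n as [|n IH]; simpl. ring. rewrite IH. ring. Qed.

Lemma Rsum_const (c : R) (n : nat) : Rsum (fun _ => c) n = INR n * c.
Proof. induction n as [|n IH]; simpl. ring. rewrite IH. destruct n; simpl; ring. Qed.

Lemma Rsum_shift (f : nat -> R) (n : nat) : Rsum f (S n) = f O + Rsum (fun k => f (S k)) n.
Proof. induction n as [|n IH]; simpl in *. ring. rewrite IH. ring. Qed.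

Lemma Rsum_geometric (f : nat -> R) (A q : R) (N : nat) :
  0 <= A -> 0 <= q < 1 -> (forall k, f k <= A * q ^ k) -> Rsum f N <= A / (1 - q).
Proof.
  intros HA Hq Hf. apply Rle_trans with (A * (1 - q ^ N) / (1 - q)).
  - induction N as [|N IH]; simpl; [right; field; lra|]. specialize (Hf N).
    apply Rle_trans with (A * (1 - q ^ N) / (1 - q) + A * q ^ N); [lra | right; field; lra].
  - unfold Rdiv. apply Rmult_le_compat_r; [apply Rlt_le, Rinv_0_lt_compat; lra|].
    pose proof (pow_le q N ltac:(lra)). nra.
Qed.

(* Convergence of a sequence; note that Cseries_sum a s unfolds to Clim (Csum a) s. *)
Definition Clim (u : nat -> Cx) (l : Cx) : Prop :=
  forall eps : R, 0 < eps -> exists M : nat, forall n, (M <= n)%nat -> Cabs (Csub (u n) l) < eps.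

Lemma Clim_components (u : nat -> Cx) (l : Cx) :
  Clim u l <-> Un_cv (fun n => Re (u n)) (Re l) /\ Un_cv (fun n => Im (u n)) (Im l).
Proof.
  split.
  - intros H; split; intros eps Heps; destruct (H eps Heps) as [M HM]; exists M; intros n Hn;
      unfold Rdist; specialize (HM n Hn).
    + pose proof (Rabs_Re_le (Csub (u n) l)) as Hle.
      change (Re (Csub (u n) l)) with (Re (u n) - Re l) in Hle. lra.
    + pose proof (Rabs_Im_le (Csub (u n) l)) as Hle.
      change (Im (Csub (u n) l)) with (Im (u n) - Im l) in Hle. lra.
  - intros [H1 H2] eps Heps.
    destruct (H1 (eps / 2) ltac:(lra)) as [M1 HM1]. destruct (H2 (eps / 2) ltac:(lra)) as [M2 HM2].
    exists (M1 + M2)%nat. intros n Hn.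
    specialize (HM1 n ltac:(lia)). specialize (HM2 n ltac:(lia)). unfold Rdist in *.
    eapply Rle_lt_trans; [apply Cabs_le_Re_Im|].
    change (Re (Csub (u n) l)) with (Re (u n) - Re l).
    change (Im (Csub (u n) l)) with (Im (u n) - Im l). lra.
Qed.

Lemma Clim_unique (u : nat -> Cx) (l1 l2 : Cx) : Clim u l1 -> Clim u l2 -> l1 = l2.
Proof.
  rewrite !Clim_components. intros [H1 H2] [H3 H4].
  apply Cx_eq; eapply UL_sequence; eassumption.
Qed.

Lemma Clim_add (u v : nat -> Cx) (a b : Cx) :
  Clim u a -> Clim v b -> Clim (fun n => Cadd (u n) (v n)) (Cadd a b).
Proof.
  rewrite !Clim_components. intros [H1 H2] [H3 H4]. split; simpl.
  - exact (CV_plus _ _ _ _ H1 H3).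
  - exact (CV_plus _ _ _ _ H2 H4).
Qed.

Lemma Clim_mul (u v : nat -> Cx) (a b : Cx) :
  Clim u a -> Clim v b -> Clim (fun n => Cmul (u n) (v n)) (Cmul a b).
Proof.
  rewrite !Clim_components. intros [H1 H2] [H3 H4]. split; simpl.
  - exact (CV_minus _ _ _ _ (CV_mult _ _ _ _ H1 H3) (CV_mult _ _ _ _ H2 H4)).
  - exact (CV_plus _ _ _ _ (CV_mult _ _ _ _ H1 H4) (CV_mult _ _ _ _ H2 H3)).
Qed.

Lemma Clim_eventually (u v : nat -> Cx) (l : Cx) (N0 : nat) :
  (forall n, (N0 <= n)%nat -> u n = v n) -> Clim u l -> Clim v l.
Proof.
  intros E H eps Heps. destruct (H eps Heps) as [N HN]. exists (N + N0)%nat.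
  intros n Hn. rewrite <- E by lia. apply HN; lia.
Qed.

Lemma Clim_const (a : Cx) : Clim (fun _ => a) a.
Proof.
  intros eps Heps. exists 0%nat. intros.
  replace (Csub a a) with Cx0 by Cring. rewrite Cabs_Cx0. lra.
Qed.

Lemma Clim_of_defect (u v : nat -> Cx) (l : Cx) :
  Clim (fun n => Csub (u n) (v n)) Cx0 -> Clim v l -> Clim u l.
Proof.
  intros H1 H2. apply (Clim_eventually (fun n => Cadd (Csub (u n) (v n)) (v n)) _ _ 0).
  - intros n _. Cring.
  - replace l with (Cadd Cx0 l) by Cring. apply Clim_add; assumption.
Qed.

Lemma Clim_le (u : nat -> Cx) (l : Cx) (B : R) (N0 : nat) :
  (forall n, (N0 <= n)%nat -> Cabs (u n) <= B) -> Clim u l -> Cabs l <= B.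
Proof.
  intros Hb H. destruct (Rle_or_lt (Cabs l) B) as [|Hlt]; [assumption|].
  destruct (H (Cabs l - B) ltac:(lra)) as [N HN].
  specialize (HN (N + N0)%nat ltac:(lia)). specialize (Hb (N + N0)%nat ltac:(lia)).
  set (m := (N + N0)%nat) in *.
  assert (Cabs l <= Cabs (u m) + Cabs (Csub l (u m))).
  { replace l with (Cadd (u m) (Csub l (u m))) at 1 by Cring. apply Cabs_triangle. }
  rewrite Cabs_sub_sym in HN. lra.
Qed.

Lemma Clim_of_Cauchy (u : nat -> Cx) :
  (forall eps, 0 < eps -> exists N, forall n m, (N <= n)%nat -> (N <= m)%nat ->
     Cabs (Csub (u n) (u m)) < eps) ->
  exists l, Clim u l.
Proof.
  intros Hc.
  assert (HR : Cauchy_crit (fun n => Re (u n))).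
  { intros eps He. destruct (Hc eps He) as [N HN]. exists N. intros n m Hn Hm. unfold Rdist.
    pose proof (Rabs_Re_le (Csub (u n) (u m))) as Hle. specialize (HN n m Hn Hm).
    change (Re (Csub (u n) (u m))) with (Re (u n) - Re (u m)) in Hle. lra. }
  assert (HI : Cauchy_crit (fun n => Im (u n))).
  { intros eps He. destruct (Hc eps He) as [N HN]. exists N. intros n m Hn Hm. unfold Rdist.
    pose proof (Rabs_Im_le (Csub (u n) (u m))) as Hle. specialize (HN n m Hn Hm).
    change (Im (Csub (u n) (u m))) with (Im (u n) - Im (u m)) in Hle. lra. }
  destruct (R_complete _ HR) as [lr Hr]. destruct (R_complete _ HI) as [li Hi].
  exists (mkC lr li). apply Clim_components. split; assumption.
Qed.

Lemma pow_small (q eps : R) : 0 <= q < 1 -> 0 < eps -> exists N, forall n, (N <= n)%nat -> q ^ n < eps.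
Proof.
  intros Hq He. destruct (pow_lt_1_zero q ltac:(rewrite Rabs_right; lra) eps He) as [N HN].
  exists N. intros n Hn. specialize (HN n Hn).
  rewrite Rabs_right in HN; [assumption | apply Rle_ge, pow_le; lra].
Qed.

Lemma geometric_tail (a : nat -> Cx) (M q : R) :
  0 <= M -> 0 <= q < 1 -> (forall k, Cabs (a k) <= M * q ^ k) ->
  forall n d, Cabs (Csub (Csum a (n + d)) (Csum a n)) <= M * q ^ n / (1 - q).
Proof.
  intros HM Hq Ha n d.
  replace (Csub (Csum a (n + d)) (Csum a n)) with (Csum (fun k => a (n + k)%nat) d).
  - eapply Rle_trans; [apply Csum_abs|]. apply Rsum_geometric.
    + pose proof (pow_le q n ltac:(lra)). nra.
    + assumption.
    + intros k. rewrite Rmult_assoc, <- pow_add. apply Ha.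
  - induction d as [|d IH]; simpl.
    + rewrite Nat.add_0_r. Cring.
    + rewrite IH, Nat.add_succ_r. simpl. Cring.
Qed.

Lemma geometric_converges (a : nat -> Cx) (M q : R) :
  0 <= M -> 0 <= q < 1 -> (forall k, Cabs (a k) <= M * q ^ k) -> exists s, Cseries_sum a s.
Proof.
  intros HM Hq Ha. apply Clim_of_Cauchy. intros eps He.
  destruct (pow_small q (eps * (1 - q) / (M + 1)) Hq) as [N HN].
  { apply Rdiv_lt_0_compat; [apply Rmult_lt_0_compat|]; lra. }
  assert (Htail : forall n d, (N <= n)%nat -> Cabs (Csub (Csum a (n + d)) (Csum a n)) < eps).
  { intros n d Hn. eapply Rle_lt_trans; [apply (geometric_tail a M q HM Hq Ha)|].
    specialize (HN n Hn). pose proof (pow_le q n ltac:(lra)).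
    apply Rmult_lt_reg_r with (1 - q); [lra|].
    unfold Rdiv in *. rewrite Rmult_assoc, Rinv_l, Rmult_1_r by lra.
    apply Rmult_lt_compat_r with (r := M + 1) in HN; [|lra].
    rewrite Rmult_assoc, Rinv_l, Rmult_1_r in HN by lra. nra. }
  exists N. intros n m Hn Hm. destruct (Nat.le_ge_cases m n).
  - replace n with (m + (n - m))%nat by lia. apply Htail; assumption.
  - rewrite Cabs_sub_sym. replace m with (n + (m - n))%nat by lia. apply Htail; assumption.
Qed.

Lemma geometric_sum_bound (a : nat -> Cx) (M q : R) (s : Cx) :
  0 <= M -> 0 <= q < 1 -> (forall k, Cabs (a k) <= M * q ^ k) -> a O = Cx0 ->
  Cseries_sum a s -> Cabs s <= M * q / (1 - q).
Proof.
  intros HM Hq Ha Ha0 Hs. apply (Clim_le (Csum a) s _ 1); [|exact Hs].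
  intros N HN. replace (Csum a N) with (Csub (Csum a (1 + (N - 1))) (Csum a 1)).
  - replace (M * q / (1 - q)) with (M * q ^ 1 / (1 - q)) by (simpl; field; lra).
    apply geometric_tail; assumption.
  - replace (1 + (N - 1))%nat with N by lia.
    change (Csum a 1) with (Cadd Cx0 (a O)). rewrite Ha0. Cring.
Qed.

Definition constc (k : Cx) (n : nat) : Cx := match n with O => k | S _ => Cx0 end.

Lemma expansion_ext_near (f g : Cx -> Cx) (c : nat -> Cx) :
  has_expansion f c -> (exists rho, 0 < rho /\ forall z, Cabs z < rho -> f z = g z) ->
  has_expansion g c.
Proof.
  intros [r [Hr H]] [rho [Hrho E]]. exists (Rmin r rho). split; [apply Rmin_pos; assumption|].
  intros z Hz. rewrite <- E.
  - apply H. eapply Rlt_le_trans; [apply Hz | apply Rmin_l].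
  - eapply Rlt_le_trans; [apply Hz | apply Rmin_r].
Qed.

Lemma expansion_ext (f g : Cx -> Cx) (c : nat -> Cx) :
  has_expansion f c -> (forall z, f z = g z) -> has_expansion g c.
Proof. intros H E. apply (expansion_ext_near f); [assumption|]. exists 1. split; [lra | auto]. Qed.

Lemma expansion_coef_ext (f : Cx -> Cx) (c d : nat -> Cx) :
  has_expansion f c -> (forall n, c n = d n) -> has_expansion f d.
Proof.
  intros [r [Hr H]] E. exists r. split; [assumption|]. intros z Hz.
  apply (Clim_eventually _ _ _ 0 (fun n _ => Csum_ext _ _ n (fun k _ => f_equal (fun x => Cmul x _) (E k)))).
  exact (H z Hz).
Qed.

Lemma expansion_const (k : Cx) : has_expansion (fun _ => k) (constc k).
Proof.
  exists 1. split; [lra|]. intros z _.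
  apply (Clim_eventually (fun _ => k) _ _ 1); [|apply Clim_const].
  intros [|n] Hn; [lia|]. rewrite Csum_supported_at0.
  - simpl. Cring.
  - intros [|j] Hj; [lia|]. simpl. Cring.
Qed.

Lemma expansion_scale (f : Cx -> Cx) (c : nat -> Cx) (k : Cx) :
  has_expansion f c -> has_expansion (fun z => Cmul k (f z)) (fun n => Cmul k (c n)).
Proof.
  intros [r [Hr H]]. exists r. split; [assumption|]. intros z Hz.
  apply (Clim_eventually (fun n => Cmul k (Csum (fun j => Cmul (c j) (Cpow z j)) n)) _ _ 0).
  - intros n _. rewrite <- Csum_mul_l. apply Csum_ext. intros; Cring.
  - apply Clim_mul; [apply Clim_const | exact (H z Hz)].
Qed.

Lemma expansion_add (f g : Cx -> Cx) (c d : nat -> Cx) :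
  has_expansion f c -> has_expansion g d ->
  has_expansion (fun z => Cadd (f z) (g z)) (fun n => Cadd (c n) (d n)).
Proof.
  intros [r [Hr H]] [r' [Hr' H']]. exists (Rmin r r'). split; [apply Rmin_pos; assumption|].
  intros z Hz.
  specialize (H z ltac:(eapply Rlt_le_trans; [apply Hz | apply Rmin_l])).
  specialize (H' z ltac:(eapply Rlt_le_trans; [apply Hz | apply Rmin_r])).
  apply (Clim_eventually (fun n => Cadd (Csum (fun j => Cmul (c j) (Cpow z j)) n)
                                        (Csum (fun j => Cmul (d j) (Cpow z j)) n)) _ _ 0).
  - intros n _. rewrite <- Csum_add. apply Csum_ext. intros; Cring.
  - apply Clim_add; assumption.
Qed.

Lemma expansion_at0 (f : Cx -> Cx) (c : nat -> Cx) : has_expansion f c -> f Cx0 = c O.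
Proof.
  intros [r [Hr H]]. specialize (H Cx0 ltac:(rewrite Cabs_Cx0; lra)).
  eapply Clim_unique; [exact H|].
  apply (Clim_eventually (fun _ => c O) _ _ 1); [|apply Clim_const].
  intros [|n] Hn; [lia|]. rewrite Csum_supported_at0.
  - simpl. Cring.
  - intros [|j] Hj; [lia|]. simpl. Cring.
Qed.

Lemma expansion_values_agree (f g : Cx -> Cx) (c : nat -> Cx) :
  has_expansion f c -> has_expansion g c ->
  exists rho, 0 < rho /\ forall z, Cabs z < rho -> f z = g z.
Proof.
  intros [r [Hr H]] [r' [Hr' H']]. exists (Rmin r r'). split; [apply Rmin_pos; assumption|].
  intros z Hz. eapply Clim_unique.
  - apply H. eapply Rlt_le_trans; [apply Hz | apply Rmin_l].
  - apply H'. eapply Rlt_le_trans; [apply Hz | apply Rmin_r].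
Qed.

Lemma dominated_terms (c : nat -> Cx) (M rho : R) (z : Cx) :
  (forall n, Cabs (c n) <= M * rho ^ n) ->
  forall k, Cabs (Cmul (c k) (Cpow z k)) <= M * (rho * Cabs z) ^ k.
Proof.
  intros Hc k. rewrite Cabs_mul, Cabs_pow, Rpow_mult_distr, <- Rmult_assoc.
  apply Rmult_le_compat_r; [apply pow_le, Cabs_ge0 | apply Hc].
Qed.

Lemma expansion_coef_bound (f : Cx -> Cx) (c : nat -> Cx) :
  has_expansion f c -> exists M rho, 0 < M /\ 0 < rho /\ forall n, Cabs (c n) <= M * rho ^ n.
Proof.
  intros [r [Hr H]]. set (z0 := RtoC (r / 2)).
  assert (Hz0 : Cabs z0 = r / 2) by (unfold z0; rewrite Cabs_RtoC; apply Rabs_right; lra).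
  specialize (H z0 ltac:(lra)).
  set (a := fun n => Cmul (c n) (Cpow z0 n)) in *.
  destruct (H (1 / 2) ltac:(lra)) as [N HN].
  (* the terms of a convergent series are eventually bounded, hence bounded *)
  assert (Htail : forall n, (N <= n)%nat -> Cabs (a n) <= 1).
  { intros n Hn. pose proof (HN n Hn) as H1. pose proof (HN (S n) ltac:(lia)) as H2.
    change (Csum a (S n)) with (Cadd (Csum a n) (a n)) in H2.
    replace (a n) with (Cadd (Csub (Cadd (Csum a n) (a n)) (f z0)) (Csub (f z0) (Csum a n))) by Cring.
    eapply Rle_trans; [apply Cabs_triangle|]. rewrite (Cabs_sub_sym (f z0)). lra. }
  set (M := 1 + Rsum (fun k => Cabs (a k)) N).
  assert (HM : forall n, Cabs (a n) <= M).
  { intros n. unfold M. pose proof (Rsum_nonneg (fun k => Cabs (a k)) N (fun k => Cabs_ge0 _)).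
    destruct (Compare_dec.le_lt_dec N n) as [Hn|Hn]; [specialize (Htail n Hn); lra|].
    pose proof (Rsum_mono (fun k => Cabs (a k)) (S n) N (fun k => Cabs_ge0 _) Hn) as Hmono.
    change (Rsum (fun k => Cabs (a k)) (S n)) with (Rsum (fun k => Cabs (a k)) n + Cabs (a n)) in Hmono.
    pose proof (Rsum_nonneg (fun k => Cabs (a k)) n (fun k => Cabs_ge0 _)). lra. }
  exists M, (/ (r / 2)). split.
  { unfold M. pose proof (Rsum_nonneg (fun k => Cabs (a k)) N (fun k => Cabs_ge0 _)). lra. }
  split; [apply Rinv_0_lt_compat; lra|].
  intros n. specialize (HM n). unfold a in HM. rewrite Cabs_mul, Cabs_pow, Hz0 in HM.
  assert (0 < (r / 2) ^ n) by (apply pow_lt; lra).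
  rewrite pow_inv. apply Rmult_le_reg_r with ((r / 2) ^ n); [assumption|].
  rewrite Rmult_assoc, Rinv_l, Rmult_1_r by lra. exact HM.
Qed.

Lemma expansion_coef_bound_shifted (f : Cx -> Cx) (c : nat -> Cx) :
  has_expansion f c ->
  exists A B : R, 0 < A /\ 0 < B /\ forall n : nat, (1 <= n)%nat -> Cabs (c n) <= A * B ^ (n - 1)%nat.
Proof.
  intros H. destruct (expansion_coef_bound f c H) as [M [rho [HM [Hrho Hb]]]].
  exists (M * rho), rho. split; [nra|]. split; [assumption|]. intros n Hn.
  eapply Rle_trans; [apply Hb|]. replace n with (S (n - 1)) at 1 by lia. simpl. right; ring.
Qed.

Definition sumfun (c : nat -> Cx) (z : Cx) : Cx :=
  epsilon (inhabits Cx0) (fun s => Cseries_sum (fun n => Cmul (c n) (Cpow z n)) s).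

Lemma expansion_of_bound (c : nat -> Cx) (M rho : R) :
  0 <= M -> 0 < rho -> (forall n, Cabs (c n) <= M * rho ^ n) -> has_expansion (sumfun c) c.
Proof.
  intros HM Hrho Hc. exists (/ (2 * rho)). split; [apply Rinv_0_lt_compat; lra|].
  intros z Hz. unfold sumfun. apply epsilon_spec.
  apply (geometric_converges _ M (rho * Cabs z)); [assumption| |apply dominated_terms, Hc].
  pose proof (Cabs_ge0 z). split; [nra|].
  apply Rmult_lt_compat_l with (r := rho) in Hz; [|assumption].
  replace (rho * / (2 * rho)) with (1 / 2) in Hz by (field; lra). lra.
Qed.

Lemma expansion_small_near0 (f : Cx -> Cx) (c : nat -> Cx) :
  has_expansion f c -> c O = Cx0 ->
  forall eps, 0 < eps -> exists delta, 0 < delta /\ forall z, Cabs z < delta -> Cabs (f z) < eps.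
Proof.
  intros Hf Hc0 eps Heps.
  destruct (expansion_coef_bound f c Hf) as [M [rho [HM [Hrho Hb]]]].
  destruct Hf as [r [Hr Hf]].
  set (delta := Rmin r (Rmin (/ (2 * rho)) (eps / (4 * M * rho)))).
  assert (Hd1 : delta <= / (2 * rho)) by (unfold delta; eapply Rle_trans; [apply Rmin_r | apply Rmin_l]).
  assert (Hd2 : delta <= eps / (4 * M * rho)) by (unfold delta; eapply Rle_trans; [apply Rmin_r | apply Rmin_r]).
  exists delta. split.
  { repeat apply Rmin_pos; try assumption; [apply Rinv_0_lt_compat | apply Rdiv_lt_0_compat]; nra. }
  intros z Hz. set (q := rho * Cabs z). pose proof (Cabs_ge0 z).
  assert (Hq : 0 <= q <= 1 / 2).
  { unfold q. split; [nra|]. apply Rmult_le_compat_l with (r := rho) in Hd1; [|lra].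
    replace (rho * / (2 * rho)) with (1 / 2) in Hd1 by (field; lra). nra. }
  assert (Hq2 : 2 * M * q < eps).
  { unfold q. apply Rmult_le_compat_l with (r := 4 * M * rho) in Hd2; [|nra].
    replace (4 * M * rho * (eps / (4 * M * rho))) with eps in Hd2 by (field; lra). nra. }
  eapply Rle_lt_trans.
  - apply (geometric_sum_bound (fun n => Cmul (c n) (Cpow z n)) M q); try lra.
    + apply dominated_terms, Hb.
    + rewrite Hc0. Cring.
    + apply Hf. eapply Rlt_le_trans; [apply Hz | apply Rmin_l].
  - apply Rle_lt_trans with (2 * M * q); [|assumption].
    unfold Rdiv. apply Rmult_le_reg_r with (1 - q); [lra|].
    rewrite Rmult_assoc, Rinv_l, Rmult_1_r by lra.
    assert (0 <= M * q * (1 - 2 * q)) by (apply Rmult_le_pos; nra). nra.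
Qed.

(** The Cauchy product *)

Definition conv (c d : nat -> Cx) (n : nat) : Cx :=
  Csum (fun k => Cmul (c k) (d (n - k)%nat)) (S n).

Lemma Csum_conv (a b : nat -> Cx) (N : nat) :
  Csum (conv a b) N = Csum (fun k => Cmul (a k) (Csum b (N - k))) N.
Proof.
  induction N as [|N IH]; [reflexivity|].
  change (Csum (conv a b) (S N)) with (Cadd (Csum (conv a b) N) (conv a b N)).
  change (Csum (fun k => Cmul (a k) (Csum b (S N - k))) (S N))
    with (Cadd (Csum (fun k => Cmul (a k) (Csum b (S N - k))) N) (Cmul (a N) (Csum b (S N - N)))).
  rewrite IH, (Csum_ext (fun k => Cmul (a k) (Csum b (S N - k)))
                 (fun k => Cadd (Cmul (a k) (Csum b (N - k))) (Cmul (a k) (b (N - k)%nat)))).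
  - rewrite Csum_add. unfold conv. change (Csum ?f (S N)) with (Cadd (Csum f N) (f N)).
    cbv beta. rewrite Nat.sub_diag. replace (S N - N)%nat with 1%nat by lia.
    change (Csum b 1) with (Cadd Cx0 (b O)). Cring.
  - intros k Hk. replace (S N - k)%nat with (S (N - k)) by lia. simpl. Cring.
Qed.

Lemma cauchy_product_defect (a b : nat -> Cx) (M q : R) (N : nat) :
  0 <= M -> 0 <= q < 1 ->
  (forall k, Cabs (a k) <= M * q ^ k) -> (forall k, Cabs (b k) <= M * q ^ k) ->
  Cabs (Csub (Csum (conv a b) N) (Cmul (Csum a N) (Csum b N))) <= INR N * (M * M * q ^ N / (1 - q)).
Proof.
  intros HM Hq Ha Hb.
  rewrite Csum_conv, <- Csum_mul_r, <- Csum_sub.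
  rewrite (Csum_ext _ (fun k => Cmul (a k) (Csub (Csum b (N - k)) (Csum b N)))) by (intros; Cring).
  eapply Rle_trans; [apply Csum_abs|]. rewrite <- Rsum_const. apply Rsum_le. intros k Hk.
  rewrite Cabs_mul, Cabs_sub_sym.
  replace (M * M * q ^ N / (1 - q)) with ((M * q ^ k) * (M * q ^ (N - k) / (1 - q))).
  - apply Rmult_le_compat; [apply Cabs_ge0 | apply Cabs_ge0 | apply Ha|].
    replace N with ((N - k) + k)%nat at 1 by lia. apply geometric_tail; assumption.
  - replace (q ^ N) with (q ^ k * q ^ (N - k)) by (rewrite <- pow_add; f_equal; lia).
    field. lra.
Qed.

Lemma INR_le_pow2 (n : nat) : INR n <= 2 ^ n.
Proof.
  induction n as [|n IH]; [simpl; lra|].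
  rewrite S_INR. simpl. pose proof (pow_R1_Rle 2 n ltac:(lra)). lra.
Qed.

Lemma cauchy_product (a b : nat -> Cx) (A B : Cx) (M q : R) :
  0 <= M -> 0 <= q <= 1 / 4 ->
  (forall k, Cabs (a k) <= M * q ^ k) -> (forall k, Cabs (b k) <= M * q ^ k) ->
  Clim (Csum a) A -> Clim (Csum b) B -> Clim (Csum (conv a b)) (Cmul A B).
Proof.
  intros HM Hq Ha Hb HA HB.
  apply Clim_of_defect with (v := fun N => Cmul (Csum a N) (Csum b N)); [|apply Clim_mul; assumption].
  intros eps Heps.
  destruct (pow_small (1 / 2) (eps / (2 * M * M + 1))) as [N0 HN0]; [lra | apply Rdiv_lt_0_compat; nra|].
  exists N0. intros N HN. specialize (HN0 N HN).
  replace (Csub (Csub (Csum (conv a b) N) (Cmul (Csum a N) (Csum b N))) Cx0)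
    with (Csub (Csum (conv a b) N) (Cmul (Csum a N) (Csum b N))) by Cring.
  eapply Rle_lt_trans; [apply (cauchy_product_defect a b M q); try assumption; lra|].
  assert (Hpow : INR N * q ^ N <= (1 / 2) ^ N).
  { apply Rle_trans with (2 ^ N * q ^ N).
    - apply Rmult_le_compat_r; [apply pow_le; lra | apply INR_le_pow2].
    - rewrite <- Rpow_mult_distr. apply pow_incr. lra. }
  assert (Hfactor : M * M / (1 - q) <= 2 * (M * M)).
  { unfold Rdiv. apply Rmult_le_reg_r with (1 - q); [lra|].
    rewrite Rmult_assoc, Rinv_l, Rmult_1_r by lra. nra. }
  assert (0 <= INR N * q ^ N) by (apply Rmult_le_pos; [apply pos_INR | apply pow_le; lra]).
  assert (0 <= M * M / (1 - q)) by (unfold Rdiv; apply Rmult_le_pos; [nra | apply Rlt_le, Rinv_0_lt_compat; lra]).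
  replace (INR N * (M * M * q ^ N / (1 - q))) with ((INR N * q ^ N) * (M * M / (1 - q))) by (field; lra).
  apply Rle_lt_trans with ((eps / (2 * M * M + 1)) * (2 * (M * M))).
  - apply Rmult_le_compat; lra.
  - replace eps with ((eps / (2 * M * M + 1)) * (2 * M * M + 1)) at 2 by (field; nra).
    assert (0 < eps / (2 * M * M + 1)) by (apply Rdiv_lt_0_compat; nra). nra.
Qed.

Lemma conv_scaled_terms (c d : nat -> Cx) (z : Cx) (n : nat) :
  Cmul (conv c d n) (Cpow z n) =
  conv (fun k => Cmul (c k) (Cpow z k)) (fun k => Cmul (d k) (Cpow z k)) n.
Proof.
  unfold conv. rewrite <- Csum_mul_r. apply Csum_ext. intros k Hk.
  replace (Cpow z n) with (Cpow z (k + (n - k))) by (f_equal; lia). rewrite Cpow_add. Cring.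
Qed.

Lemma expansion_mul (f g : Cx -> Cx) (c d : nat -> Cx) :
  has_expansion f c -> has_expansion g d -> has_expansion (fun z => Cmul (f z) (g z)) (conv c d).
Proof.
  intros Hf Hg.
  destruct (expansion_coef_bound f c Hf) as [M1 [r1 [HM1 [Hr1 Hb1]]]].
  destruct (expansion_coef_bound g d Hg) as [M2 [r2 [HM2 [Hr2 Hb2]]]].
  destruct Hf as [R1 [HR1 Hf]]. destruct Hg as [R2 [HR2 Hg]].
  set (M := M1 + M2). set (rho := r1 + r2).
  assert (Hcommon : forall (e : nat -> Cx) Mi ri, 0 < Mi -> 0 < ri -> Mi <= M -> ri <= rho ->
            (forall n, Cabs (e n) <= Mi * ri ^ n) -> forall n, Cabs (e n) <= M * rho ^ n).
  { intros e Mi ri HMi Hri HMM Hrr He n. eapply Rle_trans; [apply He|].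
    apply Rmult_le_compat; [lra | apply pow_le; lra | assumption | apply pow_incr; lra]. }
  assert (Hc : forall n, Cabs (c n) <= M * rho ^ n) by (apply (Hcommon c M1 r1); unfold M, rho; lra || assumption).
  assert (Hd : forall n, Cabs (d n) <= M * rho ^ n) by (apply (Hcommon d M2 r2); unfold M, rho; lra || assumption).
  assert (Hrho : 0 < rho) by (unfold rho; lra).
  exists (Rmin (Rmin R1 R2) (/ (4 * rho))). split.
  { repeat apply Rmin_pos; try assumption. apply Rinv_0_lt_compat; lra. }
  intros z Hz.
  assert (Hz1 : Cabs z < R1) by (eapply Rlt_le_trans; [apply Hz|]; eapply Rle_trans; [apply Rmin_l | apply Rmin_l]).
  assert (Hz2 : Cabs z < R2) by (eapply Rlt_le_trans; [apply Hz|]; eapply Rle_trans; [apply Rmin_l | apply Rmin_r]).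
  assert (Hz3 : Cabs z < / (4 * rho)) by (eapply Rlt_le_trans; [apply Hz | apply Rmin_r]).
  assert (Hq : 0 <= rho * Cabs z <= 1 / 4).
  { pose proof (Cabs_ge0 z). split; [nra|].
    apply Rmult_lt_compat_l with (r := rho) in Hz3; [|assumption].
    replace (rho * / (4 * rho)) with (1 / 4) in Hz3 by (field; lra). lra. }
  apply (Clim_eventually (Csum (conv (fun k => Cmul (c k) (Cpow z k)) (fun k => Cmul (d k) (Cpow z k)))) _ _ 0).
  - intros N _. apply Csum_ext. intros n _. symmetry. apply conv_scaled_terms.
  - apply (cauchy_product _ _ _ _ M (rho * Cabs z)); try apply dominated_terms; auto.
    + unfold M; lra.
    + exact (Hf z Hz1).
    + exact (Hg z Hz2).
Qed.

Lemma expansion_pow (f : Cx -> Cx) (c : nat -> Cx) (n : nat) :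
  has_expansion f c -> exists a, has_expansion (fun z => Cpow (f z) n) a.
Proof.
  intros H. induction n as [|n [a Ha]].
  - exists (constc Cx1). apply expansion_const.
  - exists (conv c a). exact (expansion_mul _ _ _ _ H Ha).
Qed.

Lemma Csqrt_sq (w : Cx) : Cmul (Csqrt w) (Csqrt w) = w.
Proof.
  pose proof (Re_le_Cabs w) as Hle. pose proof (Re_ge_neg_Cabs w) as Hge. pose proof (Cabs_sq w) as Hsq.
  set (sg := if Rlt_dec (Im w) 0 then -1 else 1).
  set (p := sqrt ((Cabs w + Re w) / 2)). set (m := sqrt ((Cabs w - Re w) / 2)).
  assert (Hsg : sg * sg = 1) by (unfold sg; destruct Rlt_dec; ring).
  assert (Hp : p * p = (Cabs w + Re w) / 2) by (apply sqrt_sqrt; lra).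
  assert (Hm : m * m = (Cabs w - Re w) / 2) by (apply sqrt_sqrt; lra).
  assert (Hpm : p * m = Rabs (Im w / 2)).
  { unfold p, m. rewrite <- sqrt_mult_alt by lra. rewrite <- sqrt_Rsqr_abs. f_equal. unfold Rsqr.
    replace ((Cabs w + Re w) / 2 * ((Cabs w - Re w) / 2)) with ((Cabs w * Cabs w - Re w * Re w) / 4) by field.
    rewrite Hsq. field. }
  apply Cx_eq; unfold Csqrt, Cmul; simpl; fold sg p m.
  - replace (p * p - sg * m * (sg * m)) with (p * p - (sg * sg) * (m * m)) by ring.
    rewrite Hp, Hm, Hsg. field.
  - replace (p * (sg * m) + sg * m * p) with (2 * sg * (p * m)) by ring.
    rewrite Hpm. unfold sg. destruct Rlt_dec.
    + rewrite Rabs_left by lra. field.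
    + rewrite Rabs_right by lra. field.
Qed.

Lemma Csqrt_Re_nonneg (w : Cx) : 0 <= Re (Csqrt w).
Proof. apply sqrt_pos. Qed.

Lemma Csqrt_Re_pos (w : Cx) : 0 < Re w -> 0 < Re (Csqrt w).
Proof. intros H. apply sqrt_lt_R0. pose proof (Re_le_Cabs w). lra. Qed.

Lemma square_root_unique (S Q : Cx) : Cmul S S = Cmul Q Q -> 0 < Re S -> 0 <= Re Q -> S = Q.
Proof.
  intros HSQ HS HQ.
  assert (Hfact : Cmul (Csub S Q) (Cadd S Q) = Cx0).
  { transitivity (Csub (Cmul S S) (Cmul Q Q)); [Cring|]. rewrite HSQ. Cring. }
  destruct (Cmul_integral _ _ Hfact) as [H|H].
  - transitivity (Cadd (Csub S Q) Q); [Cring|]. rewrite H. Cring.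
  - exfalso. assert (Re (Cadd S Q) = 0) by (rewrite H; reflexivity). simpl in *. lra.
Qed.

(** A majorant principle for quadratic recursions *)

Definition convR (x y : nat -> R) (n : nat) : R := Rsum (fun k => x k * y (n - k)%nat) (S n).

Lemma Rsum_convR (x y : nat -> R) (N : nat) :
  Rsum (convR x y) N = Rsum (fun k => x k * Rsum y (N - k)) N.
Proof.
  induction N as [|N IH]; [reflexivity|].
  change (Rsum (convR x y) (S N)) with (Rsum (convR x y) N + convR x y N).
  change (Rsum (fun k => x k * Rsum y (S N - k)) (S N))
    with (Rsum (fun k => x k * Rsum y (S N - k)) N + x N * Rsum y (S N - N)).
  rewrite IH, (Rsum_ext (fun k => x k * Rsum y (S N - k)) (fun k => x k * Rsum y (N - k) + x k * y (N - k)%nat)).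
  - rewrite Rsum_add. unfold convR. change (Rsum ?f (S N)) with (Rsum f N + f N).
    cbv beta. rewrite Nat.sub_diag. replace (S N - N)%nat with 1%nat by lia. simpl. ring.
  - intros k Hk. replace (S N - k)%nat with (S (N - k)) by lia. simpl. ring.
Qed.

(* A nonnegative sequence x with x_0 = 0 and 2 s x_n <= h_n + (x*x)_n, where the
   partial sums of h stay below s^2, has all its partial sums below s: inductively
   2 s X_N <= s^2 + s X_N, because (x*x) sums to at most X_N times a previous sum. *)
Lemma majorant_partial_sums (x h : nat -> R) (s : R) :
  0 < s -> (forall n, 0 <= x n) -> x O = 0 -> (forall N, Rsum h N <= s * s) ->
  (forall n, 2 * s * x n <= h n + convR x x n) -> forall N, Rsum x N <= s.
Proof.
  intros Hs Hx Hx0 Hh Hrec N. induction N as [|N IH]; [simpl; lra|].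
  assert (Hsum : 2 * s * Rsum x (S N) <= Rsum h (S N) + Rsum (fun k => x k * Rsum x (S N - k)) (S N)).
  { rewrite <- Rsum_scal, <- Rsum_convR, <- Rsum_add. apply Rsum_le. intros; apply Hrec. }
  assert (Hquad : Rsum (fun k => x k * Rsum x (S N - k)) (S N) <= s * Rsum x (S N)).
  { rewrite <- Rsum_scal. apply Rsum_le. intros [|k] Hk; [rewrite Hx0; lra|].
    assert (Rsum x (S N - S k) <= Rsum x N) by (apply Rsum_mono; [assumption | lia]).
    specialize (Hx (S k)). nra. }
  specialize (Hh (S N)). nra.
Qed.

(** Formal square root of a power series *)

Section FormalSquareRoot.

Variable c : nat -> Cx.
Variable s0 : Cx.

(* Table of the coefficients t_0 = 0, t_1, ..., t_n of a series t such that
   (s0 + t)^2 = c beyond order 0 (later entries are 0).  The n-th coefficient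
   solves 2 s0 t_n = c_n - (t*t)_n, whose right side involves t_1, ..., t_(n-1)
   only, since t_0 = 0. *)
Fixpoint sqrt_table (n : nat) : nat -> Cx :=
  match n with
  | O => fun _ => Cx0
  | S m =>
      let p := sqrt_table m in
      fun k => if (k =? S m)%nat
               then Cmul (Cinv (Cmul (RtoC 2) s0)) (Csub (c (S m)) (conv p p (S m)))
               else p k
  end.

Definition sqrt_coef (n : nat) : Cx := sqrt_table n n.

Lemma sqrt_table_stable (m k : nat) : (k <= m)%nat -> sqrt_table m k = sqrt_coef k.
Proof.
  intros Hk. induction Hk as [|m Hk IH]; [reflexivity|].
  simpl. destruct (Nat.eqb_spec k (S m)); [lia | exact IH].
Qed.

Lemma sqrt_coef_0 : sqrt_coef O = Cx0.
Proof. reflexivity. Qed.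

Lemma sqrt_coef_S (n : nat) :
  sqrt_coef (S n) =
  Cmul (Cinv (Cmul (RtoC 2) s0)) (Csub (c (S n)) (conv sqrt_coef sqrt_coef (S n))).
Proof.
  unfold sqrt_coef at 1. simpl. rewrite Nat.eqb_refl. f_equal. f_equal.
  unfold conv. apply Csum_ext. intros k Hk.
  (* each product only involves indices <= n, or else the vanishing index 0 *)
  destruct (Nat.eq_dec k 0) as [->|Hk0].
  - rewrite (sqrt_table_stable n 0) by lia. rewrite sqrt_coef_0. Cring.
  - destruct (Nat.eq_dec k (S n)) as [->|HkS].
    + rewrite Nat.sub_diag, (sqrt_table_stable n 0) by lia. rewrite sqrt_coef_0. Cring.
    + rewrite !sqrt_table_stable by lia. reflexivity.
Qed.

Hypothesis s0_nonzero : s0 <> Cx0.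

Lemma sqrt_coef_eq (n : nat) : (1 <= n)%nat ->
  Cadd (Cmul (Cmul (RtoC 2) s0) (sqrt_coef n)) (conv sqrt_coef sqrt_coef n) = c n.
Proof.
  intros Hn. destruct n as [|n]; [lia|]. rewrite sqrt_coef_S.
  assert (Hinv : Cmul (Cmul (RtoC 2) s0) (Cinv (Cmul (RtoC 2) s0)) = Cx1).
  { apply Cinv_r. intros H0. destruct (Cmul_integral _ _ H0) as [H2|H2]; [|contradiction].
    apply (f_equal Re) in H2. simpl in H2. lra. }
  set (w := Cmul (RtoC 2) s0) in *. set (u := Cinv w) in *.
  set (X := Csub (c (S n)) (conv sqrt_coef sqrt_coef (S n))).
  replace (Cmul w (Cmul u X)) with (Cmul (Cmul w u) X) by Cring.
  rewrite Hinv. unfold X. Cring.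
Qed.

Definition weighted_coef (r : R) (n : nat) : R := Cabs (sqrt_coef n) * r ^ n.

Lemma weighted_coef_rec (r : R) (n : nat) : 0 < r ->
  2 * Cabs s0 * weighted_coef r (S n) <=
  Cabs (c (S n)) * r ^ S n + convR (weighted_coef r) (weighted_coef r) (S n).
Proof.
  intros Hr.
  assert (Habs : 2 * Cabs s0 * Cabs (sqrt_coef (S n)) <=
                 Cabs (c (S n)) + Rsum (fun k => Cabs (sqrt_coef k) * Cabs (sqrt_coef (S n - k)%nat)) (S (S n))).
  { replace (2 * Cabs s0 * Cabs (sqrt_coef (S n))) with (Cabs (Cmul (Cmul (RtoC 2) s0) (sqrt_coef (S n))))
      by (rewrite !Cabs_mul, Cabs_RtoC, Rabs_right by lra; reflexivity).
    replace (Cmul (Cmul (RtoC 2) s0) (sqrt_coef (S n)))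
      with (Csub (c (S n)) (conv sqrt_coef sqrt_coef (S n))) by (rewrite <- (sqrt_coef_eq (S n)) by lia; Cring).
    eapply Rle_trans; [apply Cabs_sub_triangle|]. apply Rplus_le_compat_l.
    eapply Rle_trans; [apply Csum_abs | right; apply Rsum_ext; intros; apply Cabs_mul]. }
  unfold weighted_coef, convR.
  replace (Rsum (fun k => Cabs (sqrt_coef k) * r ^ k * (Cabs (sqrt_coef (S n - k)%nat) * r ^ (S n - k))) (S (S n)))
    with (r ^ S n * Rsum (fun k => Cabs (sqrt_coef k) * Cabs (sqrt_coef (S n - k)%nat)) (S (S n))).
  - assert (0 <= r ^ S n) by (apply pow_le; lra). nra.
  - rewrite <- Rsum_scal. apply Rsum_ext. intros k Hk.
    replace (r ^ S n) with (r ^ k * r ^ (S n - k)) by (rewrite <- pow_add; f_equal; lia). ring.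
Qed.

Variables M rho : R.
Hypothesis M_pos : 0 < M.
Hypothesis rho_pos : 0 < rho.
Hypothesis c_bound : forall n, Cabs (c n) <= M * rho ^ n.

Lemma weighted_coef_sum (r : R) (N : nat) : 0 < r -> rho * r <= 1 / 2 ->
  Rsum (fun n => Cabs (c (S n)) * r ^ S n) N <= 2 * (M * rho * r).
Proof.
  intros Hr Hrr. eapply Rle_trans.
  - assert (0 <= M * rho * r) by (apply Rmult_le_pos; [apply Rmult_le_pos|]; lra).
    apply (Rsum_geometric _ (M * rho * r) (rho * r)); [assumption | split; nra|].
    intros k. eapply Rle_trans; [apply Rmult_le_compat_r; [apply pow_le; lra | apply c_bound]|].
    right. rewrite Rpow_mult_distr. simpl. ring.
  - unfold Rdiv. apply Rmult_le_reg_r with (1 - rho * r); [lra|].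
    rewrite Rmult_assoc, Rinv_l, Rmult_1_r by lra.
    assert (0 <= M * rho * r * (1 - 2 * (rho * r))) by (apply Rmult_le_pos; [apply Rmult_le_pos; [apply Rmult_le_pos|]|]; lra).
    nra.
Qed.

(* The formal square root has geometrically bounded coefficients: for r small
   enough the weighted coefficients satisfy the majorant principle with s = |s0|. *)
Lemma sqrt_coef_bound : exists r, 0 < r /\ forall n, Cabs (sqrt_coef n) <= Cabs s0 * (/ r) ^ n.
Proof.
  set (sg := Cabs s0). assert (Hsg : 0 < sg) by (apply Cabs_pos; assumption).
  set (r := Rmin (/ (2 * rho)) (sg * sg / (2 * M * rho))).
  assert (Hr : 0 < r) by (apply Rmin_pos; [apply Rinv_0_lt_compat | apply Rdiv_lt_0_compat]; nra).
  assert (Hrr1 : rho * r <= 1 / 2).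
  { apply Rle_trans with (rho * / (2 * rho)); [apply Rmult_le_compat_l; [lra | apply Rmin_l]|].
    right; field; lra. }
  assert (Hrr2 : M * rho * r <= sg * sg / 2).
  { apply Rle_trans with (M * rho * (sg * sg / (2 * M * rho))); [apply Rmult_le_compat_l; [nra | apply Rmin_r]|].
    right; field; lra. }
  exists r. split; [assumption|].
  set (x := weighted_coef r).
  set (h := fun n => match n with O => 0 | S _ => Cabs (c n) * r ^ n end).
  assert (Hx : forall n, 0 <= x n) by (intros; apply Rmult_le_pos; [apply Cabs_ge0 | apply pow_le; lra]).
  assert (Hx0 : x O = 0) by (unfold x, weighted_coef; rewrite sqrt_coef_0, Cabs_Cx0; ring).
  assert (Hh : forall N, Rsum h N <= sg * sg).
  { intros N. apply Rle_trans with (Rsum h (S N)).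
    { apply Rsum_mono; [|lia]. intros [|k]; [simpl; lra|].
      apply Rmult_le_pos; [apply Cabs_ge0 | apply pow_le; lra]. }
    rewrite Rsum_shift. simpl (h O). pose proof (weighted_coef_sum r N Hr Hrr1). unfold h. lra. }
  assert (Hrec : forall n, 2 * sg * x n <= h n + convR x x n).
  { intros [|n]; [unfold convR; simpl; rewrite Hx0; lra | apply weighted_coef_rec; assumption]. }
  intros n. pose proof (majorant_partial_sums x h sg Hsg Hx Hx0 Hh Hrec (S n)) as Hn.
  change (Rsum x (S n)) with (Rsum x n + x n) in Hn. pose proof (Rsum_nonneg x n Hx).
  unfold x, weighted_coef in *. rewrite pow_inv. assert (0 < r ^ n) by (apply pow_lt; lra).
  apply Rmult_le_reg_r with (r ^ n); [assumption|]. rewrite Rmult_assoc, Rinv_l, Rmult_1_r by lra. lra.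
Qed.

End FormalSquareRoot.

Lemma expansion_sqrt (f : Cx -> Cx) (c : nat -> Cx) :
  has_expansion f c -> 0 < Re (c O) -> exists s, has_expansion (fun z => Csqrt (f z)) s.
Proof.
  intros Hf Hc0. set (s0 := Csqrt (c O)).
  assert (Hs0 : 0 < Re s0) by (apply Csqrt_Re_pos; assumption).
  assert (Hs0nz : s0 <> Cx0) by (intros E; rewrite E in Hs0; simpl in Hs0; lra).
  set (t := sqrt_coef c s0).
  destruct (expansion_coef_bound f c Hf) as [M [rho [HM [Hrho Hcb]]]].
  destruct (sqrt_coef_bound c s0 Hs0nz M rho HM Hrho Hcb) as [r [Hr Ht]].
  assert (HT : has_expansion (sumfun t) t).
  { apply (expansion_of_bound t (Cabs s0) (/ r)); [apply Cabs_ge0 | apply Rinv_0_lt_compat; lra | exact Ht]. }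
  set (T := sumfun t) in HT.
  (* (s0 + T)^2 has the expansion c, hence equals f near 0 *)
  assert (Hsq : has_expansion (fun z => Cmul (Cadd s0 (T z)) (Cadd s0 (T z))) c).
  { eapply expansion_coef_ext; [eapply expansion_ext|].
    - exact (expansion_add _ _ _ _ (expansion_const (Cmul s0 s0))
               (expansion_add _ _ _ _ (expansion_scale _ _ (Cmul (RtoC 2) s0) HT) (expansion_mul _ _ _ _ HT HT))).
    - intros z. Cring.
    - intros [|n]; simpl.
      + unfold conv, t. simpl. rewrite sqrt_coef_0. rewrite <- (Csqrt_sq (c O)). fold s0. Cring.
      + rewrite <- (sqrt_coef_eq c s0 Hs0nz (S n)) by lia. fold t. Cring. }
  destruct (expansion_values_agree f _ c Hf Hsq) as [rho1 [Hrho1 Hagree]].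
  destruct (expansion_small_near0 T t HT (sqrt_coef_0 c s0) (Re s0) Hs0) as [delta [Hdelta Hsmall]].
  exists (fun n => Cadd (constc s0 n) (t n)).
  apply (expansion_ext_near (fun z => Cadd s0 (T z))); [exact (expansion_add _ _ _ _ (expansion_const s0) HT)|].
  exists (Rmin rho1 delta). split; [apply Rmin_pos; assumption|]. intros z Hz.
  (* both s0 + T z and Csqrt (f z) square to f z; only the first can have Re > 0 *)
  apply square_root_unique; [| |apply Csqrt_Re_nonneg].
  - rewrite Csqrt_sq. symmetry. apply Hagree. eapply Rlt_le_trans; [apply Hz | apply Rmin_l].
  - specialize (Hsmall z ltac:(eapply Rlt_le_trans; [apply Hz | apply Rmin_r])).
    pose proof (Re_ge_neg_Cabs (T z)). change (Re (Cadd s0 (T z))) with (Re s0 + Re (T z)). lra.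
Qed.

Theorem mainTheorem9
  (N : nat)
  (G : Mat)                       (* Google matrix G = G(0) *)
  (Gl : nat -> Mat)               (* perturbation coefficients G^(l), l >= 1 *)
  (g : Cx -> Mat)                  (* chi |-> G(chi) *)
  (A0 B0 : R)
  (hG : pos_row_stochastic N G)
  (hGseries : forall i j, (i < N)%nat -> (j < N)%nat ->
      has_expansion (fun chi => g chi i j)
                    (fun l => match l with O => G i j | S _ => Gl l i j end))
  (hGreal : exists delta : R, 0 < delta /\
      forall t : R, Rabs t < delta -> pos_row_stochastic N (g (RtoC t)))
  (hbound : forall l : nat, (1 <= l)%nat ->
      forall v : Vec, vnorm N (matvec N (Gl l) v) <= A0 * B0 ^ (l - 1)%nat * vnorm N v)
  (lam0 : Cx)                      (* lambda in sigma(T) *)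
  (hlam0 : is_eigenvalue N (Tmat G) lam0)
  (hlam0_lt : Cabs lam0 < 1)
  (lam : Cx -> Cx)                  (* analytic eigenvalue branch lambda(chi) *)
  (hlam_an : exists c : nat -> Cx, has_expansion lam c)
  (hlam_0 : lam Cx0 = lam0)
  (hlam_eig : exists r : R, 0 < r /\
      forall chi : Cx, Cabs chi < r -> is_eigenvalue N (Tmat (g chi)) (lam chi))
  (sgn : R) (hsgn : sgn = 1 \/ sgn = -1) :
  let mu := fun chi : Cx =>
    Cadd (lam chi) (Cmul (RtoC sgn)
                         (Cmul Ci (Csqrt (Csub Cx1 (Cmul (lam chi) (lam chi)))))) in
  (exists muc : nat -> Cx,
      has_expansion mu muc /\ muc O = mu Cx0 /\
      exists A13 B13 : R, 0 < A13 /\ 0 < B13 /\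
        forall n : nat, (1 <= n)%nat -> Cabs (muc n) <= A13 * B13 ^ (n - 1)%nat) /\
  (forall m : nat, exists a1 : nat -> Cx,
      has_expansion (fun chi => Cpow (mu chi) (2 * m)) a1 /\
      exists A14 B14 : R, 0 < A14 /\ 0 < B14 /\
        forall n : nat, (1 <= n)%nat -> Cabs (a1 n) <= A14 * B14 ^ (n - 1)%nat).
Proof.
  intros mu. destruct hlam_an as [c Hc].
  assert (Hw : has_expansion (fun z => Csub Cx1 (Cmul (lam z) (lam z)))
                 (fun n => Cadd (constc Cx1 n) (Cmul (RtoC (-1)) (conv c c n)))).
  { eapply expansion_ext.
    - exact (expansion_add _ _ _ _ (expansion_const Cx1)
               (expansion_scale _ _ (RtoC (-1)) (expansion_mul _ _ _ _ Hc Hc))).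
    - intros z. Cring. }
  assert (Hw0 : 0 < Re (Cadd (constc Cx1 0) (Cmul (RtoC (-1)) (conv c c 0)))).
  { rewrite <- (expansion_at0 _ _ Hw), hlam_0. simpl.
    pose proof (Cabs_sq lam0). pose proof (Cabs_ge0 lam0). nra. }
  destruct (expansion_sqrt _ _ Hw Hw0) as [s Hs].
  assert (Hmu : has_expansion mu (fun n => Cadd (c n) (Cmul (RtoC sgn) (Cmul Ci (s n))))).
  { exact (expansion_add _ _ _ _ Hc (expansion_scale _ _ (RtoC sgn) (expansion_scale _ _ Ci Hs))). }
  split.
  - exists (fun n => Cadd (c n) (Cmul (RtoC sgn) (Cmul Ci (s n)))).
    split; [exact Hmu|]. split; [symmetry; exact (expansion_at0 _ _ Hmu)|].
    exact (expansion_coef_bound_shifted _ _ Hmu).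
  - intros m. destruct (expansion_pow _ _ (2 * m) Hmu) as [a Ha].
    exists a. split; [exact Ha | exact (expansion_coef_bound_shifted _ _ Ha)].
Qed.
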